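(* Let $P$ be a probability distribution on an input space $\mathcal{X}$ with ground-truth labelling $G^*:\mathcal{X}\to[K]$, and suppose $P$ satisfies $(1/2,b)$-multiplicative-expansion on $\mathcal{X}$ for some $b>1$. Then for every $\rho>0$, $P$ satisfies $\left(\frac{\rho}{b-1},\rho\right)$-constant-expansion.
   Context: Let $\mathcal{T}_{wa}$ be a set of (weak) augmentation maps on $\mathcal{X}$ and $r\ge 0$. For $x\in\mathcal{X}$, $\mathcal{A}(x):=\{x' : \exists T\in\mathcal{T}_{wa}\text{ with }\|x'-T(x)\|\le r\}$; the neighborhood of $x$ is $\mathcal{N}(x):=\{x' : \mathcal{A}(x)\cap\mathcal{A}(x')\neq\emptyset\}$, and for $S\subseteq\mathcal{X}$, $\mathcal{N}(S):=\bigcup_{x\in S}\mathcal{N}(x)$. For $i\in[K]$, $\mathcal{Q}_i:=\{x: G^*(x)=i\}$, and $P_i$ denotes the conditional distribution of $P$ on $\mathcal{Q}_i$, i.e. $P_i(S)=P(S\cap\mathcal{Q}_i)/P(\mathcal{Q}_i)$. The same-class neighborhood is $\mathcal{N}^*(S):=\bigcup_{i\in[K]}\big(\mathcal{N}(S\cap\mathcal{Q}_i)\cap\mathcal{Q}_i\big)$. $P$ satisfies $(a,b)$-multiplicative-expansion if for every $i\in[K]$ and every $S\subseteq\mathcal{Q}_i$ with $P_i(S)\le a$, one has $P_i(\mathcal{N}(S))\ge\min\{bP_i(S),1\}$. $P$ satisfies $(c,\rho)$-constant-expansion if for every $S\subseteq\mathcal{X}$ with $P(S)\ge c$ and $P(S\cap\mathcal{Q}_i)\le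 P(\mathcal{Q}_i)/2$ for all $i\in[K]$, one has $P(\mathcal{N}^*(S)\setminus S)\ge\min\{\rho,P(S)\}$. *)

From HB Require Import structures.
From mathcomp Require Import all_boot all_order all_algebra.
From mathcomp Require Import all_classical all_reals.
From mathcomp Require Import topology normedtype.
Set Implicit Arguments. Unset Strict Implicit. Unset Printing Implicit Defensive.
Import Order.TTheory GRing.Theory Num.Theory.
Import numFieldNormedType.Exports.
Local Open Scope classical_set_scope.
Local Open Scope ring_scope.

Section Expansion.
Variables (R : realType) (X : normedModType R).

(* A probability distribution on X, defined on all subsets (as in the paper,
   where P(S) is taken for arbitrary S ⊆ X): nonnegative, total mass 1,
   finitely additive. *)
Definition is_prob (P : set X -> R) : Prop :=
  [/\ P setT = 1,
      (forall A, 0 <= P A) &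
      (forall A B, A `&` B = set0 -> P (A `|` B) = P A + P B)].

Definition aug_set (Twa : set (X -> X)) (r : R) (x : X) : set X :=
  [set x' | exists2 T, Twa T & `|x' - T x| <= r].

Definition nbhd (Twa : set (X -> X)) (r : R) (x : X) : set X :=
  [set x' | aug_set Twa r x `&` aug_set Twa r x' !=set0].

Definition nbhdS (Twa : set (X -> X)) (r : R) (S : set X) : set X :=
  \bigcup_(x in S) nbhd Twa r x.

Variable (K : nat).

Definition Qcls (G : X -> 'I_K) (i : 'I_K) : set X := [set x | G x = i].

Definition Pcond (P : set X -> R) (G : X -> 'I_K) (i : 'I_K) (S : set X) : R :=
  P (S `&` Qcls G i) / P (Qcls G i).

Definition nbhd_star (Twa : set (X -> X)) (r : R) (G : X -> 'I_K) (S : set X)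
  : set X :=
  \bigcup_(i in [set: 'I_K]) (nbhdS Twa r (S `&` Qcls G i) `&` Qcls G i).

Definition mult_expansion (P : set X -> R) (G : X -> 'I_K)
  (Twa : set (X -> X)) (r : R) (a b : R) : Prop :=
  forall (i : 'I_K) (S : set X), S `<=` Qcls G i ->
    Pcond P G i S <= a ->
    Pcond P G i (nbhdS Twa r S) >= Num.min (b * Pcond P G i S) 1.

Definition const_expansion (P : set X -> R) (G : X -> 'I_K)
  (Twa : set (X -> X)) (r : R) (c rho : R) : Prop :=
  forall S : set X, P S >= c ->
    (forall i : 'I_K, P (S `&` Qcls G i) <= P (Qcls G i) / 2) ->
    P (nbhd_star Twa r G S `\` S) >= Num.min rho (P S).

End Expansion.

From HB Require Import structures.
From mathcomp Require Import all_boot all_order all_algebra.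
From mathcomp Require Import all_classical all_reals.
From mathcomp Require Import topology normedtype.
From mathcomp Require Import lra.
Import Order.TTheory GRing.Theory Num.Theory.
Import numFieldNormedType.Exports.
Local Open Scope classical_set_scope.
Local Open Scope ring_scope.

Set Implicit Arguments.
Unset Strict Implicit.

(* Work class by class.  If S ∩ Q_i carries at most half of the mass of Q_i,
   multiplicative expansion gives P(N(S ∩ Q_i) ∩ Q_i) >= min(b P(S ∩ Q_i), P(Q_i)),
   and since P(Q_i) >= 2 P(S ∩ Q_i) the part of that neighbourhood lying outside S
   has mass at least min(b - 1, 1) P(S ∩ Q_i).  Summing over the classes gives
   P(N*(S) \ S) >= min(b - 1, 1) P(S), which is at least min(rho, P(S)) as soon as
   P(S) >= rho / (b - 1). *)

Section MultiplicativeToConstant.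
Variables (R : realType) (X : normedModType R) (P : set X -> R).
Hypothesis probP : is_prob P.

Lemma prob_ge0 A : 0 <= P A.
Proof. by case: probP. Qed.

Lemma prob_set0 : P set0 = 0.
Proof.
case: probP => _ _ additive.
have := additive set0 set0 (setI0 _); rewrite setU0; lra.
Qed.

Lemma probID A B : P A = P (A `&` B) + P (A `\` B).
Proof.
case: probP => _ _ additive.
rewrite -additive ?setUIDK //.
by apply/seteqP; split => x // [[_ Bx] [_ nBx]].
Qed.

Lemma le_prob A B : A `<=` B -> P A <= P B.
Proof. by move=> AB; rewrite (probID B A) (setIidr AB) lerDl prob_ge0. Qed.

Variables (K : nat) (G : X -> 'I_K).

Lemma prob_sum_classes_seq A (s : seq 'I_K) : uniq s ->
  P (A `&` [set x | G x \in s]) = \sum_(i <- s) P (A `&` Qcls G i).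
Proof.
elim: s => [_|i s IH /= /andP[i_notin_s s_uniq]].
  by rewrite big_nil -prob_set0; congr P; apply/seteqP; split => x // [].
rewrite big_cons -IH // (probID _ (Qcls G i)); congr (_ + _); congr P.
  apply/seteqP; split => x /=; first by case=> -[Ax _] Gx.
  by move=> [Ax Gx]; rewrite inE Gx eqxx.
apply/seteqP; split => x /=.
  by case=> -[Ax]; rewrite inE => /orP[/eqP Gx []|].
move=> [Ax Gx_s]; split; first by rewrite inE Gx_s orbT.
by move=> Gx; move: Gx_s; rewrite Gx (negbTE i_notin_s).
Qed.

Lemma prob_sum_classes A : P A = \sum_(i <- enum 'I_K) P (A `&` Qcls G i).
Proof.
rewrite -prob_sum_classes_seq ?enum_uniq //; congr P.
by apply/seteqP; split => [x Ax|x []] //=; rewrite mem_enum.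
Qed.

Variables (Twa : set (X -> X)) (r b : R).
Hypothesis mexpP : mult_expansion P G Twa r (1 / 2) b.

Local Notation N := (nbhdS Twa r).
Local Notation Q := (Qcls G).

Lemma mult_expansion_mass i T : T `<=` Q i -> P T <= P (Q i) / 2 ->
  Num.min (b * P T) (P (Q i)) <= P (N T `&` Q i).
Proof.
move=> TQ PT_half; have [Q0|Q_neq0] := eqVneq (P (Q i)) 0.
  by rewrite Q0 ge_min prob_ge0 ?orbT.
have Q_gt0 : 0 < P (Q i) by rewrite lt_def Q_neq0 prob_ge0.
have cond_le : Pcond P G i T <= 1 / 2.
  by rewrite /Pcond (setIidl TQ) ler_pdivrMr // mulrC mul1r.
have := mexpP TQ cond_le; rewrite /Pcond (setIidl TQ).
move=> /(ler_wpM2r (ltW Q_gt0)).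
by rewrite divfK // (minr_pMl _ _ (ltW Q_gt0)) mul1r -mulrA divfK.
Qed.

Lemma nbhd_starDI S i :
  (nbhd_star Twa r G S `\` S) `&` Q i = (N (S `&` Q i) `&` Q i) `\` (S `&` Q i).
Proof.
apply/seteqP; split => x /=.
  case=> -[[j _ [NSx Gx]] nSx] Gxi; split; last by case.
  by move: NSx; rewrite /Qcls /= in Gx Gxi; rewrite -Gxi -Gx.
case=> -[NSx Gx] nSQx; split=> //; split; first by exists i.
by move=> Sx; exact: nSQx.
Qed.

Lemma class_expansion S i : P (S `&` Q i) <= P (Q i) / 2 ->
  Num.min (b - 1) 1 * P (S `&` Q i) <= P ((nbhd_star Twa r G S `\` S) `&` Q i).
Proof.
move=> half; rewrite nbhd_starDI.
have expY := mult_expansion_mass (@subIsetr _ S (Q i)) half.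
set s := P (S `&` Q i) in half expY *; set Y := N (S `&` Q i) `&` Q i in expY *.
have YS_le : P (Y `&` (S `&` Q i)) <= s by apply: le_prob => // x [].
have splitY := probID Y (S `&` Q i).
have s_ge0 : 0 <= s := prob_ge0 _.
rewrite minr_pMl // mulrBl !mul1r ge_min; move: expY; rewrite ge_min.
by case/orP=> [bs_le|Q_le]; apply/orP; [left|right]; lra.
Qed.

Lemma nbhd_star_expansion S :
  (forall i, P (S `&` Q i) <= P (Q i) / 2) ->
  Num.min (b - 1) 1 * P S <= P (nbhd_star Twa r G S `\` S).
Proof.
move=> half; rewrite (prob_sum_classes S).
rewrite (prob_sum_classes (nbhd_star _ _ _ _ `\` _)) mulr_sumr.
by apply: ler_sum => i _; exact: class_expansion.
Qed.

End MultiplicativeToConstant.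

Theorem lemma1 (R : realType) (X : normedModType R) (K : nat)
  (P : set X -> R) (G : X -> 'I_K) (Twa : set (X -> X)) (r b : R) :
  is_prob P -> 0 <= r -> 1 < b ->
  mult_expansion P G Twa r (1 / 2) b ->
  forall rho : R, 0 < rho ->
    const_expansion P G Twa r (rho / (b - 1)) rho.
Proof.
move=> probP _ b_gt1 mexpP rho _ S PS_ge half.
apply: le_trans (nbhd_star_expansion probP mexpP half).
rewrite minr_pMl ?prob_ge0 // mul1r le_min !ge_min lexx orbT andbT.
by move: PS_ge; rewrite ler_pdivrMr ?subr_gt0 // mulrC => ->.
Qed.
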